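(* Let $\mathcal{L}$ be a functional first-order language and let $\mathcal{B}$ be an equationally Noetherian $\mathcal{L}$-algebra. Then for a finitely generated $\mathcal{L}$-algebra $\mathcal{C}$ the following conditions are equivalent: (1) $\mathrm{Th}_{\forall}(\mathcal{B}) \subseteq \mathrm{Th}_{\forall}(\mathcal{C})$ (i.e. $\mathcal{C}$ lies in the universal closure of $\mathcal{B}$); (2) $\mathrm{Th}_{\exists}(\mathcal{B}) \supseteq \mathrm{Th}_{\exists}(\mathcal{C})$; (3) $\mathcal{C}$ embeds into an ultrapower of $\mathcal{B}$; (4) $\mathcal{C}$ is discriminated by $\mathcal{B}$; (5) $\mathcal{C}$ is (isomorphic to) a limit algebra over $\mathcal{B}$; (6) $\mathcal{C}$ is (isomorphic to) the algebra defined by a complete atomic type in the theory $\mathrm{Th}_{\forall}(\mathcal{B})$ in $\mathcal{L}$; (7) $\mathcal{C}$ is (isomorphic to) the coordinate algebra of an irreducible algebraic set over $\mathcal{B}$ defined by a system of coefficient-free equations.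
   Context: A functional language $\mathcal{L}$ consists of operation symbols $F$ (with arities $n_F$) and constant symbols, no predicates; $\mathcal{L}$-structures are called $\mathcal{L}$-algebras. $\mathrm{Th}_\forall(\mathcal{M})$ ($\mathrm{Th}_\exists(\mathcal{M})$) is the set of universal (existential) $\mathcal{L}$-sentences true in $\mathcal{M}$. $\mathcal{T}_{\mathcal{L}}(X)$ is the absolutely free $\mathcal{L}$-algebra (term algebra) on variables $X$. An equation is an atomic formula $t=s$ with $t,s$ terms; for $X=\{x_1,\dots,x_n\}$ and a set $S$ of equations in $X$ (a system), $\mathrm{V}_{\mathcal{B}}(S)=\{\bar b\in B^n : \mathcal{B}\models S(\bar b)\}$ is the algebraic set defined by $S$. $\mathcal{B}$ is equationally Noetherian if for every $n$ and every system $S$ in variables $x_1,\dots,x_n$ there is a finite $S_0\subseteq S$ with $\mathrm{V}_{\mathcal{B}}(S)=\mathrm{V}_{\mathcal{B}}(S_0)$. For $Y\subseteq B^n$, $\mathrm{Rad}(Y)$ is the set of all equations in $X$ holding at every point of $Y$ (all equations if $Y=\emptyset$); it defines a congruence $\theta$ on $\mathcal{T}_{\mathcal{L}}(X)$ by $t\sim s \iff (t=s)\in\mathrm{Rad}(Y)$, and the coordinate algebra of an algebraic set $Y$ is $\Gamma(Y)=\mathcal{T}_{\mathcal{L}}(X)/\theta$. Zariski topology on $B^n$: algebraic sets form a prebasis of closed sets (closed sets are arbitrary intersections of finite unions of algebraic sets). An algebraic set is irreducible if it is not the union of two proper closed subsets. $\mathcal{C}$ is discriminated by $\mathcal{B}$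 if for every finite $W\subseteq C$ there is a homomorphism $\mathcal{C}\to\mathcal{B}$ injective on $W$. Complete atomic types: for a theory $T$ and finite $X$, an atomic type is a set $p$ of atomic formulas and negations of atomic formulas in variables $X$ such that $p\cup T$ is realized in some model of $T$; a complete atomic type is a maximal one. Its positive part $p^+$ (the atomic formulas in $p$) defines a congruence $\theta_p$ on $\mathcal{T}_{\mathcal{L}}(X)$ ($t\sim s\iff (t=s)\in p^+$), and $\mathcal{T}_{\mathcal{L}}(X)/\theta_p$ is the algebra defined by $p$. Limit algebras: a diagram-formula in a finite reduct $\mathcal{L}'$ of $\mathcal{L}$ in a finite variable set $X$ is a conjunction of atomic formulas and negated atomic formulas of $\mathcal{L}'$ such that: $\neg(x=y)$ is a conjunct for every pair of distinct $x,y\in X$; for each operation symbol $F\in\mathcal{L}'$ and each $(x_0,\dots,x_{n_F})\in X^{n_F+1}$ exactly one of $F(x_1,\dots,x_{n_F})=x_0$ or its negation is a conjunct; for each constant $c\in\mathcal{L}'$ and $x\in X$ exactly one of $x=c$ or $\neg(x=c)$ is a conjunct. A direct system of formulas $\Lambda=(I,\varphi_i,\gamma_{ij})$ consists of a directed poset $(I,\le)$, for each $i$ a consistent diagram-formula $\varphi_i$ in a finite reduct $\mathcal{L}_i$ and finite variable set $X_i$, and maps $\gamma_{ij}:X_i\to X_j$ ($i\le j$) with $\gamma_{ii}=\mathrm{id}$, $\gamma_{jk}\gamma_{ij}=\gamma_{ik}$, every conjunct of $\varphi_i(\gamma_{ij}(X_i))$ a conjunct of $\varphi_j$; moreover for every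 constant $c$ some $\varphi_i$ has a conjunct $x=c$ ($x\in X_i$), and for every $F$, $i$, and $(x_1,\dots,x_{n_F})\in X_i^{n_F}$ there is $j\ge i$ such that $\varphi_j$ has a conjunct $F(\gamma_{ij}(x_1),\dots,\gamma_{ij}(x_{n_F}))=x_j$ with $x_j\in X_j$. The limit algebra $L(\Lambda)$ has universe $\{(x,i): x\in X_i, i\in I\}/\!\equiv$ where $(x,i)\equiv(y,j)$ iff $\gamma_{ik}(x)=\gamma_{jk}(y)$ for some $k\ge i,j$; a constant $c$ is interpreted as the class of $(x,i)$ where $\varphi_i$ contains $x=c$, and $F(\langle x_1,i_1\rangle,\dots)=\langle x_j,j\rangle$ where $j\ge i_1,\dots$ and $\varphi_j$ contains $F(\gamma_{i_1j}(x_1),\dots)=x_j$ (these are well defined). $L(\Lambda)$ is a limit algebra over $\mathcal{B}$ if every $\varphi_i$ is realizable in $\mathcal{B}$ (true under some assignment $X_i\to B$). *)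

From mathcomp Require Import all_boot.
From Stdlib Require List.
Set Implicit Arguments.
Unset Strict Implicit.
Unset Printing Implicit Defensive.

Record lang := Lang {
  op : Type;
  arity : op -> nat;
  cst : Type }.

Record algebra (L : lang) := Algebra {
  carrier :> Type;
  opint : forall F : op L, ('I_(arity F) -> carrier) -> carrier;
  cint : cst L -> carrier }.

Arguments opint {L} a F _.
Arguments cint {L} a c.

Definition is_hom (L : lang) (A A' : algebra L) (h : A -> A') : Prop :=
  (forall (F : op L) (args : 'I_(arity F) -> A),
      h (opint A F args) = opint A' F (fun k => h (args k))) /\
  (forall c : cst L, h (cint A c) = cint A' c).
Arguments is_hom {L A A'} h.

Inductive term (L : lang) (V : Type) : Type :=
| tvar : V -> term L V
| tconst : cst L -> term L V
| tapp : forall F : op L, ('I_(arity F) -> term L V) -> term L V.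

Arguments tvar {L V} x.
Arguments tconst {L V} c.
Arguments tapp {L V} F args.

Fixpoint teval (L : lang) (V : Type) (A : algebra L) (v : V -> A)
    (t : term L V) : A :=
  match t with
  | tvar x => v x
  | tconst c => cint A c
  | tapp F args => opint A F (fun k => @teval L V A v (args k))
  end.
Arguments teval {L V} A v t.

Definition term_alg (L : lang) (V : Type) : algebra L :=
  @Algebra L (term L V) (fun F args => tapp F args) (fun c => tconst c).

Inductive qf (L : lang) (V : Type) : Type :=
| qeq : term L V -> term L V -> qf L V
| qnot : qf L V -> qf L V
| qand : qf L V -> qf L V -> qf L V
| qor : qf L V -> qf L V -> qf L V.

Fixpoint qholds (L : lang) (V : Type) (A : algebra L) (v : V -> A)
    (phi : qf L V) : Prop :=
  match phi with
  | qeq t s => @teval L V A v t = @teval L V A v s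
  | qnot p => ~ @qholds L V A v p
  | qand p q => @qholds L V A v p /\ @qholds L V A v q
  | qor p q => @qholds L V A v p \/ @qholds L V A v q
  end.
Arguments qholds {L V} A v phi.

(* A universal (resp. existential) L-sentence is  forall x_1..x_n, phi
   (resp. exists x_1..x_n, phi) with phi quantifier-free in 'I_n. *)
Definition univ_true (L : lang) (A : algebra L) (n : nat) (phi : qf L 'I_n) : Prop :=
  forall a : 'I_n -> A, qholds A a phi.
Arguments univ_true {L} A n phi.

Definition exist_true (L : lang) (A : algebra L) (n : nat) (phi : qf L 'I_n) : Prop :=
  exists a : 'I_n -> A, qholds A a phi.
Arguments exist_true {L} A n phi.

Definition Th_univ_sub (L : lang) (A A' : algebra L) : Prop :=
  forall (n : nat) (phi : qf L 'I_n), univ_true A n phi -> univ_true A' n phi.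
Arguments Th_univ_sub {L} A A'.

Definition Th_exist_sub (L : lang) (A A' : algebra L) : Prop :=
  forall (n : nat) (phi : qf L 'I_n), exist_true A n phi -> exist_true A' n phi.
Arguments Th_exist_sub {L} A A'.

Definition fin_gen (L : lang) (C : algebra L) : Prop :=
  exists (n : nat) (g : 'I_n -> C), forall c : C, exists t : term L 'I_n, teval C g t = c.
Arguments fin_gen {L} C.

Definition system (L : lang) (n : nat) := (term L 'I_n * term L 'I_n) -> Prop.

Definition Vset (L : lang) (B : algebra L) (n : nat) (S : system L n)
    (b : 'I_n -> B) : Prop :=
  forall e, S e -> teval B b e.1 = teval B b e.2.
Arguments Vset {L} B {n} S b.

Definition eq_noetherian (L : lang) (B : algebra L) : Prop :=
  forall (n : nat) (S : system L n),
    exists S0 : list (term L 'I_n * term L 'I_n),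
      (forall e, List.In e S0 -> S e) /\
      (forall b, Vset B S b <-> Vset B (fun e => List.In e S0) b).
Arguments eq_noetherian {L} B.

(* Zariski-closed subsets of B^n: arbitrary intersections of finite unions
   of algebraic sets. *)
Definition zclosed (L : lang) (B : algebra L) (n : nat) (Z : ('I_n -> B) -> Prop) : Prop :=
  exists (J : Type) (fam : J -> list (system L n)),
    forall b, Z b <-> (forall j, exists S, List.In S (fam j) /\ Vset B S b).
Arguments zclosed {L} B {n} Z.

Definition irreducible (L : lang) (B : algebra L) (n : nat) (Y : ('I_n -> B) -> Prop) : Prop :=
  (exists b, Y b) /\
  ~ (exists Y1 Y2 : ('I_n -> B) -> Prop,
        zclosed B Y1 /\ zclosed B Y2 /\
        (forall b, Y1 b -> Y b) /\ ~ (forall b, Y b -> Y1 b) /\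
        (forall b, Y2 b -> Y b) /\ ~ (forall b, Y b -> Y2 b) /\
        (forall b, Y b <-> Y1 b \/ Y2 b)).
Arguments irreducible {L} B {n} Y.

(* C is isomorphic to T_L(X)/theta, where theta = { (t,s) | R (t,s) }:
   there is a surjective homomorphism T_L(X) -> C whose kernel is theta. *)
Definition iso_term_quotient (L : lang) (C : algebra L) (n : nat)
    (R : term L 'I_n -> term L 'I_n -> Prop) : Prop :=
  exists h : term_alg L 'I_n -> C,
    is_hom h /\ (forall c : C, exists t, h t = c) /\
    (forall t s, h t = h s <-> R t s).
Arguments iso_term_quotient {L} C {n} R.

Definition iso_coord_alg (L : lang) (B C : algebra L) (n : nat)
    (Y : ('I_n -> B) -> Prop) : Prop :=
  iso_term_quotient C (fun t s => forall b, Y b -> teval B b t = teval B b s).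
Arguments iso_coord_alg {L} B C {n} Y.

Definition ultrafilter (I : Type) (U : (I -> Prop) -> Prop) : Prop :=
  U (fun _ => True) /\ ~ U (fun _ => False) /\
  (forall P Q : I -> Prop, U P -> (forall i, P i -> Q i) -> U Q) /\
  (forall P Q : I -> Prop, U P -> U Q -> U (fun i => P i /\ Q i)) /\
  (forall P : I -> Prop, U P \/ U (fun i => ~ P i)).
Arguments ultrafilter {I} U.

(* C embeds into the ultrapower B^I/U: an embedding C -> B^I/U, given on
   representatives (h c is a representative of the image of c). *)
Definition embeds_in_ultrapower (L : lang) (C B : algebra L) : Prop :=
  exists (I : Type) (U : (I -> Prop) -> Prop) (h : C -> I -> B),
    ultrafilter U /\
    (forall (F : op L) (args : 'I_(arity F) -> C),
        U (fun i => h (opint C F args) i = opint B F (fun k => h (args k) i))) /\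
    (forall c : cst L, U (fun i => h (cint C c) i = cint B c)) /\
    (forall x y : C, U (fun i => h x i = h y i) -> x = y).
Arguments embeds_in_ultrapower {L} C B.

Definition discriminated (L : lang) (C B : algebra L) : Prop :=
  forall W : list C, exists h : C -> B,
    is_hom h /\ (forall x y, List.In x W -> List.In y W -> h x = h y -> x = y).
Arguments discriminated {L} C B.

(* A literal (b, t, s): t = s if b = true, ~ (t = s) if b = false. *)
Definition literal (L : lang) (n : nat) := (bool * term L 'I_n * term L 'I_n)%type.

Definition lit_holds (L : lang) (n : nat) (A : algebra L) (a : 'I_n -> A)
    (l : literal L n) : Prop :=
  let: (b, t, s) := l in
  if b then teval A a t = teval A a s else teval A a t <> teval A a s.
Arguments lit_holds {L n} A a l.

Definition model_Th_univ (L : lang) (B M : algebra L) : Prop := Th_univ_sub B M.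
Arguments model_Th_univ {L} B M.

Definition atomic_type (L : lang) (B : algebra L) (n : nat) (p : literal L n -> Prop) : Prop :=
  exists M : algebra L, model_Th_univ B M /\
    exists a : 'I_n -> M, forall l, p l -> lit_holds M a l.
Arguments atomic_type {L} B n p.

Definition complete_atomic_type (L : lang) (B : algebra L) (n : nat)
    (p : literal L n -> Prop) : Prop :=
  atomic_type B n p /\
  forall q, atomic_type B n q -> (forall l, p l -> q l) -> (forall l, q l -> p l).
Arguments complete_atomic_type {L} B n p.

(* A diagram-formula in the finite reduct (dops, dcsts) of L with variables
   'I_dnv.  It is the conjunction of: ~(x = y) for all distinct x, y;
   for F in dops and (x_0, x_1..x_nF): F(x_1..) = x_0 if dopR F xs x0,
   its negation otherwise; for c in dcsts and x: x = c if dcR c x, its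
   negation otherwise. *)
Record diagram (L : lang) := Diagram {
  dops : list (op L);
  dcsts : list (cst L);
  dnv : nat;
  dopR : forall F : op L, ('I_(arity F) -> 'I_dnv) -> 'I_dnv -> Prop;
  dcR : cst L -> 'I_dnv -> Prop }.
Arguments dops {L} d.
Arguments dcsts {L} d.
Arguments dnv {L} d.
Arguments dopR {L} d F _ _.
Arguments dcR {L} d c x.

Definition dsat (L : lang) (M : algebra L) (d : diagram L) (v : 'I_(dnv d) -> M) : Prop :=
  (forall x y, x <> y -> v x <> v y) /\
  (forall F, List.In F (dops d) -> forall xs x0,
      dopR d F xs x0 <-> opint M F (fun k => v (xs k)) = v x0) /\
  (forall c, List.In c (dcsts d) -> forall x, dcR d c x <-> v x = cint M c).
Arguments dsat {L} M d v.

Definition realizable (L : lang) (M : algebra L) (d : diagram L) : Prop :=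
  exists v, dsat M d v.
Arguments realizable {L} M d.

Definition consistent (L : lang) (d : diagram L) : Prop :=
  exists M : algebra L, realizable M d.
Arguments consistent {L} d.

Record dsystem (L : lang) := DSystem {
  dI : Type;
  dle : dI -> dI -> Prop;
  dphi : dI -> diagram L;
  dgam : forall i j : dI, 'I_(dnv (dphi i)) -> 'I_(dnv (dphi j)) }.
Arguments dI {L} _.
Arguments dle {L} _ _ _.
Arguments dphi {L} _ _.
Arguments dgam {L} _ _ _ _.
(* dgam i j is only relevant when dle i j. *)

Definition is_dsystem (L : lang) (S : dsystem L) : Prop :=
  (forall i, dle S i i) /\
  (forall i j k, dle S i j -> dle S j k -> dle S i k) /\
  (forall i j, dle S i j -> dle S j i -> i = j) /\
  (exists i : dI S, True) /\
  (forall i j, exists k, dle S i k /\ dle S j k) /\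
  (forall i, consistent (dphi S i)) /\
  (forall i x, dgam S i i x = x) /\
  (forall i j k, dle S i j -> dle S j k -> forall x,
      dgam S j k (dgam S i j x) = dgam S i k x) /\
  (* every conjunct of phi_i(gamma_ij(X_i)) is a conjunct of phi_j *)
  (forall i j, dle S i j ->
     (forall x y, x <> y -> dgam S i j x <> dgam S i j y) /\
     (forall F, List.In F (dops (dphi S i)) -> forall xs x0,
        List.In F (dops (dphi S j)) /\
        (dopR (dphi S i) F xs x0 <->
         dopR (dphi S j) F (fun k => dgam S i j (xs k)) (dgam S i j x0))) /\
     (forall c, List.In c (dcsts (dphi S i)) -> forall x,
        List.In c (dcsts (dphi S j)) /\
        (dcR (dphi S i) c x <-> dcR (dphi S j) c (dgam S i j x)))) /\
  (forall c : cst L, exists i x, List.In c (dcsts (dphi S i)) /\ dcR (dphi S i) c x) /\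
  (forall (F : op L) (i : dI S) (xs : 'I_(arity F) -> 'I_(dnv (dphi S i))),
     exists j x, dle S i j /\ List.In F (dops (dphi S j)) /\
       dopR (dphi S j) F (fun k => dgam S i j (xs k)) x).

Definition limit_over (L : lang) (B : algebra L) (S : dsystem L) : Prop :=
  is_dsystem S /\ forall i, realizable B (dphi S i).
Arguments limit_over {L} B S.

Definition dnode (L : lang) (S : dsystem L) := {i : dI S & 'I_(dnv (dphi S i))}.

(* C is isomorphic to L(Lambda): a bijection between the universe of
   L(Lambda) (the pairs (x,i) modulo ==) and C, i.e. a surjection pi from the
   pairs onto C with kernel exactly ==, which respects constants and
   operations as they are interpreted in L(Lambda). *)
Definition iso_limit (L : lang) (C : algebra L) (S : dsystem L) : Prop :=
  exists pi : dnode S -> C,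
    (forall c : C, exists p, pi p = c) /\
    (forall p q : dnode S, pi p = pi q <->
       exists k, dle S (projT1 p) k /\ dle S (projT1 q) k /\
                 dgam S (projT1 p) k (projT2 p) = dgam S (projT1 q) k (projT2 q)) /\
    (forall c i x, List.In c (dcsts (dphi S i)) -> dcR (dphi S i) c x ->
       pi (existT _ i x) = cint C c) /\
    (forall (F : op L) (a : 'I_(arity F) -> dnode S) (j : dI S) (xj : 'I_(dnv (dphi S j))),
       (forall k, dle S (projT1 (a k)) j) ->
       List.In F (dops (dphi S j)) ->
       dopR (dphi S j) F (fun k => dgam S (projT1 (a k)) j (projT2 (a k))) xj ->
       opint C F (fun k => pi (a k)) = pi (existT _ j xj)).
Arguments iso_limit {L} C S.

(* Everything goes through discrimination (4).  Universal sentences descend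
   to subalgebras and are preserved by homomorphisms that are injective on the
   finitely many values of the terms involved; hence each of (3)-(7) implies
   (1): a limit algebra over B embeds into an ultrapower of B along an
   ultrafilter containing the final segments of its index set, the algebra
   defined by a complete type embeds into a model of Th_forall(B) realizing
   it, and the coordinate algebra of an irreducible algebraic set is
   discriminated because finitely many equations, each failing somewhere on
   the set, fail simultaneously at one of its points.
   Conversely, let g generate C and W be a finite subset of C.  Equational
   noetherianity replaces the equations true at g by a finite system S0, and
   the universal sentence "S0 forces two of the terms naming distinct
   elements of W to coincide" fails in C, hence in B; a counterexample in B
   defines a homomorphism C -> B injective on W.  From discrimination one
   builds the ultrapower (over finite subsets of C), the limit algebra (over
   finite fragments of C with their diagrams) and the irreducible set
   V_B(Rad(g)), whose coordinate algebra is C. *)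

From mathcomp Require Import all_boot.
From mathcomp Require Import boolp classical_sets filter finmap.

Set Implicit Arguments.
Unset Strict Implicit.
Unset Printing Implicit Defensive.

Lemma list_inP (T : eqType) (x : T) (s : seq T) : reflect (List.In x s) (x \in s).
Proof.
elim: s => [|y s IH]; first by constructor.
rewrite in_cons; apply: (iffP orP) => [[/eqP ->|/IH]|[<-|/IH]]; by [left|right|left].
Qed.

Section Terms.
Variable L : lang.

Lemma hom_teval (A A' : algebra L) (h : A -> A') (V : Type) (a : V -> A) (t : term L V) :
  is_hom h -> h (teval A a t) = teval A' (fun x => h (a x)) t.
Proof.
move=> [hF hc]; elim: t => [x|c|F args IH] //=.
by rewrite hF; congr (opint A' F); apply: funext => k; exact: IH.
Qed.

Lemma teval_tvar (V : Type) (t : term L V) : teval (term_alg L V) tvar t = t.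
Proof.
elim: t => [x|c|F args IH] //=.
by congr (tapp F); apply: funext => k; exact: IH.
Qed.

Lemma hom_term_alg (A : algebra L) (V : Type) (h : term_alg L V -> A) (t : term L V) :
  is_hom h -> h t = teval A (fun x => h (tvar x)) t.
Proof. by move=> hh; rewrite -[in LHS](teval_tvar t) hom_teval. Qed.

End Terms.

Section Formulas.
Variable L : lang.

Fixpoint qterms (V : Type) (phi : qf L V) : list (term L V) :=
  match phi with
  | qeq t s => t :: s :: nil
  | qnot p => qterms p
  | qand p q | qor p q => qterms p ++ qterms q
  end.

Lemma hom_qholds (A A' : algebra L) (h : A -> A') (V : Type) (a : V -> A) (phi : qf L V) :
  is_hom h ->
  (forall t s, List.In t (qterms phi) -> List.In s (qterms phi) ->
     h (teval A a t) = h (teval A a s) -> teval A a t = teval A a s) ->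
  qholds A a phi <-> qholds A' (fun x => h (a x)) phi.
Proof.
move=> hh; elim: phi => [t s|p IH|p IHp q IHq|p IHp q IHq] /= inj_h.
- rewrite -!hom_teval //; split=> [-> //|]; apply: inj_h; simpl; auto.
- by rewrite IH.
all: rewrite (IHp _) ?(IHq _) // => t s Ht Hs; apply: inj_h;
  by apply: List.in_or_app; auto.
Qed.

Lemma univ_true_embedding (A M : algebra L) (h : A -> M) (n : nat) (phi : qf L 'I_n) :
  is_hom h -> injective h -> univ_true M n phi -> univ_true A n phi.
Proof. by move=> hh inj_h HM a; apply/(hom_qholds hh) => [t s _ _ /inj_h|]. Qed.

Lemma discriminated_univ (B C : algebra L) : discriminated C B -> Th_univ_sub B C.
Proof.
move=> disc n phi HB a.
have [h [hh inj_h]] := disc (List.map (teval C a) (qterms phi)).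
apply/(hom_qholds hh); last exact: HB.
by move=> t s Ht Hs; apply: inj_h; exact: List.in_map.
Qed.

Lemma Th_univ_exist_sub (B C : algebra L) : Th_univ_sub B C <-> Th_exist_sub C B.
Proof.
split=> H n phi.
- move=> [a Ha]; apply: contrapT => Hn.
  have : univ_true B n (qnot phi) by move=> b /= Hb; apply: Hn; exists b.
  by move/H/(_ a).
- move=> Hu a; apply: contrapT => Hn.
  have [b /= Hb] : exist_true B n (qnot phi) by apply: H; exists a.
  exact: Hb (Hu b).
Qed.

End Formulas.

Section Presentations.
Variables (L : lang) (C : algebra L) (n : nat).

Definition generates (g : 'I_n -> C) : Prop := forall c : C, exists t, teval C g t = c.

Lemma hom_of_generators (A : algebra L) (g : 'I_n -> C) (a : 'I_n -> A) :
  generates g ->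
  (forall t s, teval C g t = teval C g s -> teval A a t = teval A a s) ->
  exists h : C -> A, is_hom h /\ forall t, h (teval C g t) = teval A a t.
Proof.
move=> gen_g rad_sub; have [tm tmP] := choice gen_g.
pose h c := teval A a (tm c).
have hK t : h (teval C g t) = teval A a t by apply: rad_sub; rewrite tmP.
exists h; split=> //; split=> [F args|c].
- have -> : opint C F args = teval C g (tapp F (fun k => tm (args k))).
    by rewrite /=; congr (opint C F); apply: funext => k; rewrite tmP.
  by rewrite hK /=; congr (opint A F); apply: funext => k; rewrite -hK tmP.
- exact: (hK (tconst c)).
Qed.

Lemma generated_hom_inj (A : algebra L) (g : 'I_n -> C) (a : 'I_n -> A) (h : C -> A) :
  generates g -> (forall t, h (teval C g t) = teval A a t) ->
  (forall t s, teval A a t = teval A a s -> teval C g t = teval C g s) -> injective h.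
Proof.
move=> gen_g hK rad_sub x y.
by have [t <-] := gen_g x; have [s <-] := gen_g y; rewrite !hK => /rad_sub.
Qed.

Lemma iso_term_quotient_generators (R : term L 'I_n -> term L 'I_n -> Prop) :
  iso_term_quotient C R ->
  exists g, generates g /\ forall t s, teval C g t = teval C g s <-> R t s.
Proof.
move=> [h [hh [h_surj h_ker]]]; exists (fun k => h (tvar k)).
have hE t : teval C (fun k => h (tvar k)) t = h t by rewrite -hom_term_alg.
split=> [c|t s]; last by rewrite !hE.
by have [t <-] := h_surj c; exists t; rewrite hE.
Qed.

Lemma generators_iso_term_quotient (g : 'I_n -> C) (R : term L 'I_n -> term L 'I_n -> Prop) :
  generates g -> (forall t s, teval C g t = teval C g s <-> R t s) ->
  iso_term_quotient C R.
Proof. by move=> gen_g g_ker; exists (teval C g). Qed.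

End Presentations.

Definition separating_eqs (L : lang) (T V : Type) (tm : T -> term L V) (W : list T) :
    list (term L V * term L V) :=
  List.map (fun p => (tm p.1, tm p.2))
    (List.filter (fun p => ~~ `[< p.1 = p.2 >]) (List.list_prod W W)).

Lemma separating_eqsP (L : lang) (T V : Type) (tm : T -> term L V) (W : list T) e :
  List.In e (separating_eqs tm W) <->
  exists x y, [/\ List.In x W, List.In y W, x <> y & e = (tm x, tm y)].
Proof.
rewrite List.in_map_iff; split=> [[[x y] [<-]]|[x [y [Wx Wy nxy ->]]]].
  by rewrite List.filter_In List.in_prod_iff => [[[Wx Wy] /asboolPn]]; exists x, y.
by exists (x, y); rewrite List.filter_In List.in_prod_iff; split=> //; split=> //; exact/asboolPn.
Qed.

Section EquationFormulas.
Variables (L : lang) (n : nat) (t0 : term L 'I_n).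

(* [t0 = t0] closes the folds: the language may have no closed terms. *)
Definition conj_eqs (l : list (term L 'I_n * term L 'I_n)) : qf L 'I_n :=
  List.fold_right (fun e acc => qand (qeq e.1 e.2) acc) (qeq t0 t0) l.

Definition disj_eqs (l : list (term L 'I_n * term L 'I_n)) : qf L 'I_n :=
  List.fold_right (fun e acc => qor (qeq e.1 e.2) acc) (qnot (qeq t0 t0)) l.

Lemma conj_eqsP (A : algebra L) (a : 'I_n -> A) l :
  qholds A a (conj_eqs l) <-> forall e, List.In e l -> teval A a e.1 = teval A a e.2.
Proof.
elim: l => [|e l IH] /=; first by split.
rewrite IH; split=> [[He Hl] e' [<-|]|H]; auto.
Qed.

Lemma disj_eqsP (A : algebra L) (a : 'I_n -> A) l :
  qholds A a (disj_eqs l) <-> exists e, List.In e l /\ teval A a e.1 = teval A a e.2.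
Proof.
elim: l => [|e l IH] /=; first by split=> [/(_ erefl)|[e []]].
rewrite IH; split=> [[He|[e' [? ?]]]|[e' [[<-|?] ?]]];
  by [left|right; exists e'|exists e; auto|exists e'; auto].
Qed.

End EquationFormulas.

Section UniversalDiscrimination.
Variables (L : lang) (B C : algebra L).

Lemma discriminated_empty : ~ inhabited C -> discriminated C B.
Proof.
move=> nC W; have void (T : Type) (c : C) : T by case: (nC (inhabits c)).
exists (void B); split; first split=> [F args|c].
- exact: void (opint C F args).
- exact: void (cint C c).
- by move=> x; exact: void x.
Qed.

Lemma univ_discriminated :
  eq_noetherian B -> fin_gen C -> Th_univ_sub B C -> discriminated C B.
Proof.
move=> noeth [n [g gen_g]] HU W.
case: (pselect (inhabited C)) => [[c0]|/discriminated_empty]; last exact.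
have [tm tmP] := choice gen_g.
pose S : system L n := fun e => teval C g e.1 = teval C g e.2.
have [S0 [S0S VS]] := noeth n S.
pose P := separating_eqs tm W.
pose phi := qor (qnot (conj_eqs (tm c0) S0)) (disj_eqs (tm c0) P).
have nphi_C : ~ qholds C g phi.
  move=> /= [|/disj_eqsP [_ [/separating_eqsP [x [y [_ _ nxy ->]]]]]].
    by apply; apply/conj_eqsP => e /S0S.
  by rewrite /= !tmP.
have [b nphi_B] : exists b, ~ qholds B b phi.
  apply: contrapT => H; apply: nphi_C; apply: HU => b.
  by apply: contrapT => Hb; apply: H; exists b.
move: nphi_B => /= /not_orP [/contrapT/conj_eqsP S0b /disj_eqsP nPb].
have Sb : Vset B S b by apply/VS.
have [h [hh hK]] := hom_of_generators gen_g (fun t s E => Sb (t, s) E).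
exists h; split=> // x y Wx Wy hxy; apply: contrapT => nxy; apply: nPb.
exists (tm x, tm y); split; first by apply/separating_eqsP; exists x, y.
by rewrite /= -!hK !tmP.
Qed.

End UniversalDiscrimination.

Section AtomicTypes.
Variables (L : lang) (B : algebra L).

Lemma lit_holds_neg (M : algebra L) (n : nat) (a : 'I_n -> M) b t s :
  lit_holds M a (~~ b, t, s) <-> ~ lit_holds M a (b, t, s).
Proof. by case: b => /=; split; [auto|auto|auto|move/contrapT]. Qed.

Lemma complete_atomic_type_of_point (M : algebra L) (n : nat) (a : 'I_n -> M) :
  model_Th_univ B M -> complete_atomic_type B n (lit_holds M a).
Proof.
move=> HM; split=> [|q [M' [_ [a' Ha']]] pq [[b t] s] ql].
  by exists M; split=> //; exists a.
apply: contrapT => /lit_holds_neg/pq/Ha'/lit_holds_neg; apply; exact: Ha'.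
Qed.

Lemma complete_atomic_type_point (n : nat) (p : literal L n -> Prop) :
  complete_atomic_type B n p ->
  exists (M : algebra L) (a : 'I_n -> M),
    model_Th_univ B M /\ forall l, p l <-> lit_holds M a l.
Proof.
move=> [[M [HM [a Ha]]] p_max]; exists M, a; split=> // l; split; first exact: Ha.
by apply: (p_max (lit_holds M a)) => //; exists M; split=> //; exists a.
Qed.

Variable C : algebra L.

Lemma univ_complete_atomic_type :
  fin_gen C -> Th_univ_sub B C ->
  exists (n : nat) (p : literal L n -> Prop),
    complete_atomic_type B n p /\ iso_term_quotient C (fun t s => p (true, t, s)).
Proof.
move=> [n [g gen_g]] HU; exists n, (lit_holds C g); split.
  exact: complete_atomic_type_of_point.
exact: generators_iso_term_quotient.
Qed.

Lemma complete_atomic_type_univ (n : nat) (p : literal L n -> Prop) :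
  complete_atomic_type B n p -> iso_term_quotient C (fun t s => p (true, t, s)) ->
  Th_univ_sub B C.
Proof.
move=> /complete_atomic_type_point [M [a [HM pE]]].
move=> /iso_term_quotient_generators [g [gen_g gE]].
have g_ker t s : teval C g t = teval C g s <-> teval M a t = teval M a s.
  by split=> [/gE/pE|/(pE (true, t, s))/gE].
have [h [hh hK]] := hom_of_generators gen_g (fun t s => (g_ker t s).1).
move=> m phi /HM; apply: univ_true_embedding hh _.
exact: generated_hom_inj gen_g hK (fun t s => (g_ker t s).2).
Qed.

End AtomicTypes.

Lemma list_witnesses (X Y : Type) (P : X -> Y -> Prop) (Q : Y -> Prop) (l : list X) :
  (forall x, List.In x l -> exists y, P x y /\ Q y) ->
  exists l' : list Y, (forall y, List.In y l' -> Q y) /\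
                      forall x, List.In x l -> exists y, List.In y l' /\ P x y.
Proof.
elim: l => [|x l IH] H; first by exists nil.
have [y [Pxy Qy]] := H x (or_introl erefl).
have [l' [l'Q l'P]] := IH (fun x' Hx' => H x' (or_intror Hx')).
exists (y :: l'); split=> [y' [<-|/l'Q]|x' [<-|/l'P [y' [? ?]]]] //.
- by exists y; split; [left|].
- by exists y'; split; [right|].
Qed.

Section Irreducibility.
Variables (L : lang) (B : algebra L) (n : nat).

Definition add_eq (S : system L n) (e : term L 'I_n * term L 'I_n) : system L n :=
  fun x => S x \/ x = e.

Lemma Vset_add_eq (S : system L n) e b :
  Vset B (add_eq S e) b <-> Vset B S b /\ teval B b e.1 = teval B b e.2.
Proof.
split=> [H|[HS He] x [/HS|->]] //.
by split=> [x Sx|]; apply: H; [left|right].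
Qed.

Lemma zclosed_Vset (S : system L n) : zclosed B (Vset B S).
Proof.
exists unit, (fun _ => S :: nil) => b.
by split=> [Sb _|/(_ tt) [S' [[<-|[]] //]]]; exists S; split; [left|].
Qed.

Lemma zclosed_union (Ss : list (system L n)) :
  zclosed B (fun b => exists S, List.In S Ss /\ Vset B S b).
Proof. by exists unit, (fun _ => Ss) => b; split=> [H _|/(_ tt)]. Qed.

Lemma zclosed_avoid (Z : ('I_n -> B) -> Prop) (b1 : 'I_n -> B) :
  zclosed B Z -> ~ Z b1 ->
  exists E : list (term L 'I_n * term L 'I_n),
    (forall e, List.In e E -> teval B b1 e.1 <> teval B b1 e.2) /\
    forall b, Z b -> exists e, List.In e E /\ teval B b e.1 = teval B b e.2.
Proof.
move=> [J [fam ZE]] /ZE /existsNP [j /forallNP b1_out].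
have S_fail (S : system L n) :
    List.In S (fam j) -> exists e, S e /\ teval B b1 e.1 <> teval B b1 e.2.
  move=> HS; have /existsNP [e /not_implyP] : ~ Vset B S b1.
    by move=> Sb1; apply: (b1_out S).
  by exists e.
have [E [Eb1 E_fam]] := list_witnesses S_fail.
exists E; split=> // b /ZE /(_ j) [S [HS Sb]].
have [e [He Se]] := E_fam S HS; exists e; split=> //; exact: Sb.
Qed.

Lemma irreducible_common_nonroot (S : system L n) (E : list (term L 'I_n * term L 'I_n)) :
  irreducible B (Vset B S) ->
  (forall e, List.In e E -> exists b, Vset B S b /\ teval B b e.1 <> teval B b e.2) ->
  exists b, Vset B S b /\ forall e, List.In e E -> teval B b e.1 <> teval B b e.2.
Proof.
move=> [[b0 Sb0] irr]; elim: E => [|e E IH] E_sep; first by exists b0.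
have [b1 [Sb1 b1E]] := IH (fun e' He' => E_sep e' (or_intror He')).
have [b2 [Sb2 b2e]] := E_sep e (or_introl erefl).
(* Otherwise V(S) is covered by V(S, e) and by the V(S, e'), e' in E. *)
apply: contrapT => no_common; apply: irr.
exists (Vset B (add_eq S e)),
  (fun b => exists S', List.In S' (List.map (add_eq S) E) /\ Vset B S' b).
split; first exact: zclosed_Vset.
split; first exact: zclosed_union.
split; first by move=> b /Vset_add_eq [].
split; first by move=> /(_ b2 Sb2) /Vset_add_eq [].
split; first by move=> b [_ [/List.in_map_iff [e' [<- _]]] /Vset_add_eq []].
split.
  move=> /(_ b1 Sb1) [_ [/List.in_map_iff [e' [<- He']]] /Vset_add_eq [_]].
  exact: b1E.
move=> b; split; last first.
  by case=> [/Vset_add_eq []|[_ [/List.in_map_iff [e' [<- _]]] /Vset_add_eq []]].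
move=> Sb; apply: contrapT => /not_orP [nb1 nb2]; apply: no_common.
exists b; split=> // e' [<-|He'] Eb.
- by apply: nb1; apply/Vset_add_eq.
- by apply: nb2; exists (add_eq S e'); split; [exact: List.in_map|exact/Vset_add_eq].
Qed.

Lemma common_nonroot_irreducible (Y : ('I_n -> B) -> Prop) :
  (exists b, Y b) ->
  (forall E : list (term L 'I_n * term L 'I_n),
     (forall e, List.In e E -> exists b, Y b /\ teval B b e.1 <> teval B b e.2) ->
     exists b, Y b /\ forall e, List.In e E -> teval B b e.1 <> teval B b e.2) ->
  irreducible B Y.
Proof.
move=> Yne common; split=> // [[Y1 [Y2 [cl1 [cl2 [_ [nsub1 [_ [nsub2 Yun]]]]]]]]].
move/existsNP: nsub1 => [b1 /not_implyP [Yb1 /(zclosed_avoid cl1) [E1 [E1b1 E1cov]]]].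
move/existsNP: nsub2 => [b2 /not_implyP [Yb2 /(zclosed_avoid cl2) [E2 [E2b2 E2cov]]]].
have /common [b [Yb bE]] :
    forall e, List.In e (E1 ++ E2) -> exists b, Y b /\ teval B b e.1 <> teval B b e.2.
  by move=> e /(List.in_app_or _ _ _) [He|He]; [exists b1|exists b2]; auto.
case/Yun: Yb => [/E1cov|/E2cov] [e [He Hb]]; apply: (bE e) Hb;
  by apply: List.in_or_app; auto.
Qed.

End Irreducibility.

Section CoordinateAlgebras.
Variables (L : lang) (B C : algebra L).

Lemma discriminated_coord_alg :
  fin_gen C -> discriminated C B ->
  exists (n : nat) (S : system L n),
    irreducible B (Vset B S) /\ iso_coord_alg B C (Vset B S).
Proof.
move=> [n [g gen_g]] disc.
pose S : system L n := fun e => teval C g e.1 = teval C g e.2.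
have hom_point h : is_hom h -> Vset B S (fun k => h (g k)).
  by move=> hh e Se; rewrite -!hom_teval // Se.
have separate (E : list (term L 'I_n * term L 'I_n)) : exists h, is_hom h /\
    forall e, List.In e E -> teval C g e.1 <> teval C g e.2 ->
      teval B (fun k => h (g k)) e.1 <> teval B (fun k => h (g k)) e.2.
  have [h [hh inj_h]] :=
    disc (List.flat_map (fun e => teval C g e.1 :: teval C g e.2 :: nil) E).
  exists h; split=> // e He ne; rewrite -!hom_teval // => hE.
  by apply: ne; apply: inj_h hE; apply/List.in_flat_map; exists e; split=> //=; auto.
have rad t s : teval C g t = teval C g s <->
               forall b, Vset B S b -> teval B b t = teval B b s.
  split=> [E b Sb|H]; first exact: (Sb (t, s)).
  apply: contrapT => ne; have [h [hh h_sep]] := separate ((t, s) :: nil).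
  exact: h_sep (t, s) (or_introl erefl) ne (H _ (hom_point h hh)).
exists n, S; split; last exact: generators_iso_term_quotient gen_g rad.
apply: common_nonroot_irreducible.
  by have [h [hh _]] := separate nil; exists (fun k => h (g k)); exact: hom_point.
move=> E E_sep; have [h [hh h_sep]] := separate E.
exists (fun k => h (g k)); split=> [|e He]; first exact: hom_point.
apply: h_sep => // /rad C_eq; have [b [Sb nb]] := E_sep e He; exact: nb (C_eq b Sb).
Qed.

Lemma coord_alg_discriminated (n : nat) (S : system L n) :
  irreducible B (Vset B S) -> iso_coord_alg B C (Vset B S) -> discriminated C B.
Proof.
move=> irr /iso_term_quotient_generators [g [gen_g rad]] W.
have [tm tmP] := choice gen_g.
have /(irreducible_common_nonroot irr) [b [Sb b_sep]] :
    forall e, List.In e (separating_eqs tm W) ->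
      exists b, Vset B S b /\ teval B b e.1 <> teval B b e.2.
  move=> _ /separating_eqsP [x [y [_ _ nxy ->]]].
  apply: contrapT => /forallNP H; apply: nxy; rewrite -(tmP x) -(tmP y).
  by apply/rad => b Sb; apply: contrapT => nb; apply: (H b).
have [h [hh hK]] := hom_of_generators gen_g (fun t s E => (rad t s).1 E b Sb).
exists h; split=> // x y Wx Wy hxy; apply: contrapT => nxy.
apply: (b_sep (tm x, tm y)); first by apply/separating_eqsP; exists x, y.
by rewrite /= -!hK !tmP.
Qed.

End CoordinateAlgebras.

Lemma UltraFilter_ultrafilter (I : Type) (G : set_system I) :
  UltraFilter G -> ultrafilter G.
Proof.
move=> UG; split; first exact: filterT.
split; first exact: filter_not_empty.
split; first by move=> P Q GP PQ; exact: filterS PQ GP.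
split; first by move=> P Q; exact: filterI.
by move=> P; exact: in_ultra_setVsetC.
Qed.

Lemma directed_ultrafilter (I : Type) (le : I -> I -> Prop) :
  inhabited I -> (forall i j k, le i j -> le j k -> le i k) ->
  (forall i j, exists k, le i k /\ le j k) ->
  exists U, ultrafilter U /\ forall i, U (le i).
Proof.
move=> [i0] le_trans le_directed.
have F_filter : Filter (filter_from setT le).
  apply: filter_fromT_filter => [|i j]; first by exists i0.
  have [k [ik jk]] := le_directed i j.
  by exists k => l kl; split; apply: le_trans kl.
have F_proper : ProperFilter (filter_from setT le).
  apply: filter_from_proper => i _.
  by have [k [ik _]] := le_directed i i; exists k.
have [G [UG FG]] := ultraFilterLemma F_proper.
exists G; split; first exact: UltraFilter_ultrafilter.
by move=> i; apply: FG; exists i.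
Qed.

Section UltrafilterFacts.
Variables (I : Type) (U : (I -> Prop) -> Prop).
Hypothesis U_ultra : ultrafilter U.

Lemma ultrafilter_mono (P Q : I -> Prop) : U P -> (forall i, P i -> Q i) -> U Q.
Proof. by case: U_ultra => _ [_ [U_mono _]]; exact: U_mono. Qed.

Lemma ultrafilter_and (P Q : I -> Prop) : U P -> U Q -> U (fun i => P i /\ Q i).
Proof. by case: U_ultra => _ [_ [_ [U_and _]]]; exact: U_and. Qed.

Lemma ultrafilter_all (P : I -> Prop) : (forall i, P i) -> U P.
Proof. by case: U_ultra => U_T _ HP; apply: ultrafilter_mono U_T _ => i _; exact: HP. Qed.

Lemma ultrafilter_ex (P : I -> Prop) : U P -> exists i, P i.
Proof.
case: U_ultra => _ [U_F _] UP; apply: contrapT => /forallNP nP.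
by apply: U_F; apply: ultrafilter_mono UP _.
Qed.

Lemma ultrafilter_not (P : I -> Prop) : U (fun i => ~ P i) <-> ~ U P.
Proof.
split=> [UnP UP|nUP]; last by case: U_ultra => _ [_ [_ [_ /(_ P) []]]].
by have [i []] := ultrafilter_ex (ultrafilter_and UP UnP).
Qed.

Lemma ultrafilter_or (P Q : I -> Prop) : U (fun i => P i \/ Q i) <-> U P \/ U Q.
Proof.
split=> [UPQ|[UP|UQ]]; last 2 first.
- by apply: ultrafilter_mono UP _ => i; left.
- by apply: ultrafilter_mono UQ _ => i; right.
apply: contrapT => /not_orP [/ultrafilter_not nP /ultrafilter_not nQ].
have := ultrafilter_ex (ultrafilter_and UPQ (ultrafilter_and nP nQ)).
by move=> [i [[Pi|Qi] [nPi nQi]]]; [exact: nPi|exact: nQi].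
Qed.

Lemma ultrafilter_forall_ord (k : nat) (P : 'I_k -> I -> Prop) :
  (forall j, U (P j)) -> U (fun i => forall j, P j i).
Proof.
move=> UP.
have : U (fun i => forall j, List.In j (enum 'I_k) -> P j i).
  elim: (enum 'I_k) => [|j l IH]; first exact: ultrafilter_all.
  by apply: ultrafilter_mono (ultrafilter_and (UP j) IH) _ => i [Pj Pl] j' [<-|/Pl].
by move/ultrafilter_mono; apply=> i Hi j; apply: Hi; apply/list_inP; rewrite mem_enum.
Qed.

End UltrafilterFacts.

Section Los.
Variables (L : lang) (B C : algebra L) (I : Type) (U : (I -> Prop) -> Prop).
Variable h : C -> I -> B.
Hypotheses (U_ultra : ultrafilter U)
  (h_op : forall (F : op L) (args : 'I_(arity F) -> C),
     U (fun i => h (opint C F args) i = opint B F (fun k => h (args k) i)))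
  (h_cst : forall c : cst L, U (fun i => h (cint C c) i = cint B c))
  (h_inj : forall x y : C, U (fun i => h x i = h y i) -> x = y).

Lemma los_teval (V : Type) (a : V -> C) (t : term L V) :
  U (fun i => h (teval C a t) i = teval B (fun x => h (a x) i) t).
Proof.
elim: t => [x|c|F args IH] /=; [exact: ultrafilter_all|exact: h_cst|].
have U_args := ultrafilter_forall_ord U_ultra IH.
have := ultrafilter_and U_ultra (h_op (fun k => teval C a (args k))) U_args.
by move/(ultrafilter_mono U_ultra); apply=> i [-> IHi]; congr (opint B F); apply: funext.
Qed.

Lemma los_qholds (V : Type) (a : V -> C) (phi : qf L V) :
  qholds C a phi <-> U (fun i => qholds B (fun x => h (a x) i) phi).
Proof.
elim: phi => [t s|p IH|p IHp q IHq|p IHp q IHq] /=.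
- have Uts := ultrafilter_and U_ultra (los_teval a t) (los_teval a s).
  split=> [E|Ueq]; first by apply: (ultrafilter_mono U_ultra) Uts _ => i [<- <-]; rewrite E.
  apply: h_inj; apply: (ultrafilter_mono U_ultra) (ultrafilter_and U_ultra Ueq Uts) _.
  by move=> i [E [-> ->]].
- by rewrite IH (ultrafilter_not U_ultra).
- rewrite IHp IHq; split=> [[UP UQ]|UPQ]; first exact: ultrafilter_and.
  by split; apply: (ultrafilter_mono U_ultra) UPQ _ => i [].
- by rewrite IHp IHq (ultrafilter_or U_ultra).
Qed.

End Los.

Section Ultrapowers.
Variables (L : lang) (B C : algebra L).

Lemma ultrapower_univ : embeds_in_ultrapower C B -> Th_univ_sub B C.
Proof.
move=> [I [U [h [U_ultra [h_op [h_cst h_inj]]]]]] n phi HB a.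
apply/(los_qholds U_ultra h_op h_cst h_inj); exact: ultrafilter_all.
Qed.

Lemma discriminated_ultrapower : discriminated C B -> embeds_in_ultrapower C B.
Proof.
move=> disc; have [hW hWP] := choice disc.
have incl_directed (W W' : list C) :
    exists W'', List.incl W W'' /\ List.incl W' W''.
  by exists (W ++ W'); split=> x Hx; apply: List.in_or_app; auto.
have [U [U_ultra U_final]] :=
  directed_ultrafilter (inhabits nil) (@List.incl_tran C) incl_directed.
exists (list C), U, (fun c W => hW W c); split=> //.
split; first by move=> F args; apply: ultrafilter_all => // W; case: (hWP W) => [[]].
split; first by move=> c; apply: ultrafilter_all => // W; case: (hWP W) => [[]].
move=> x y Uxy; have [W [xyW hxy]] := ultrafilter_ex U_ultra
  (ultrafilter_and U_ultra (U_final (x :: y :: nil)) Uxy).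
by apply: (hWP W).2 hxy; apply: xyW; [left|right; left].
Qed.

End Ultrapowers.

Section DirectSystems.
Variables (L : lang) (S : dsystem L).
Hypothesis S_sys : is_dsystem S.

Lemma dle_refl i : dle S i i.
Proof. by case: S_sys => le_refl _; exact: le_refl. Qed.

Lemma dle_trans i j k : dle S i j -> dle S j k -> dle S i k.
Proof. by case: S_sys => _ [le_trans _]; exact: le_trans. Qed.

Lemma dI_inhabited : inhabited (dI S).
Proof. by case: S_sys => _ [_ [_ [[i _] _]]]; exact: inhabits i. Qed.

Lemma dle_directed i j : exists k, dle S i k /\ dle S j k.
Proof. by case: S_sys => _ [_ [_ [_ [directed _]]]]; exact: directed. Qed.

Lemma dle_upper_bound (k : nat) (f : 'I_k -> dI S) (i0 : dI S) :
  exists j, dle S i0 j /\ forall x, dle S (f x) j.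
Proof.
suff [j [i0j fj]] : exists j, dle S i0 j /\ forall x, List.In x (enum 'I_k) -> dle S (f x) j.
  by exists j; split=> // x; apply: fj; apply/list_inP; rewrite mem_enum.
elim: (enum 'I_k) => [|x l [j [i0j fj]]]; first by exists i0; split=> //; exact: dle_refl.
have [m [jm fxm]] := dle_directed j (f x).
exists m; split=> [|y [<-|/fj yj]] //.
- exact: dle_trans i0j jm.
- exact: dle_trans yj jm.
Qed.

Lemma dgam_comp i j k x :
  dle S i j -> dle S j k -> dgam S j k (dgam S i j x) = dgam S i k x.
Proof. by case: S_sys => _ [_ [_ [_ [_ [_ [_ [comp _]]]]]]] ij jk; exact: comp ij jk x. Qed.

Lemma dgam_inj i j x y : dle S i j -> dgam S i j x = dgam S i j y -> x = y.
Proof.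
case: S_sys => _ [_ [_ [_ [_ [_ [_ [_ [pres _]]]]]]]] ij E.
by apply: contrapT => nxy; exact: (pres i j ij).1 x y nxy E.
Qed.

Lemma dopR_dgam i j (F : op L) xs x0 :
  dle S i j -> List.In F (dops (dphi S i)) ->
  List.In F (dops (dphi S j)) /\
  (dopR (dphi S i) F xs x0 <->
   dopR (dphi S j) F (fun k => dgam S i j (xs k)) (dgam S i j x0)).
Proof.
case: S_sys => _ [_ [_ [_ [_ [_ [_ [_ [pres _]]]]]]]] ij.
by move/(pres i j ij).2.1.
Qed.

Lemma dcR_dgam i j (c : cst L) x :
  dle S i j -> List.In c (dcsts (dphi S i)) ->
  List.In c (dcsts (dphi S j)) /\ (dcR (dphi S i) c x <-> dcR (dphi S j) c (dgam S i j x)).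
Proof.
case: S_sys => _ [_ [_ [_ [_ [_ [_ [_ [pres _]]]]]]]] ij.
by move/(pres i j ij).2.2.
Qed.

Lemma dcst_named (c : cst L) :
  exists i x, List.In c (dcsts (dphi S i)) /\ dcR (dphi S i) c x.
Proof. by case: S_sys => _ [_ [_ [_ [_ [_ [_ [_ [_ [named _]]]]]]]]]; exact: named. Qed.

Lemma dop_defined (F : op L) (i : dI S) (xs : 'I_(arity F) -> 'I_(dnv (dphi S i))) :
  exists j x, dle S i j /\ List.In F (dops (dphi S j)) /\
    dopR (dphi S j) F (fun k => dgam S i j (xs k)) x.
Proof. by case: S_sys => _ [_ [_ [_ [_ [_ [_ [_ [_ [_ defined]]]]]]]]]; exact: defined. Qed.

End DirectSystems.

Section LimitEmbedding.
Variables (L : lang) (B C : algebra L) (S : dsystem L).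
Hypothesis S_sys : is_dsystem S.
Variable v : forall i, 'I_(dnv (dphi S i)) -> B.
Arguments v : clear implicits.
Hypothesis v_sat : forall i, dsat B (dphi S i) (v i).
Variable pi : dnode S -> C.
Hypotheses
  (pi_eq : forall p q : dnode S, pi p = pi q <->
     exists k, dle S (projT1 p) k /\ dle S (projT1 q) k /\
               dgam S (projT1 p) k (projT2 p) = dgam S (projT1 q) k (projT2 q))
  (pi_cst : forall c i x, List.In c (dcsts (dphi S i)) -> dcR (dphi S i) c x ->
     pi (existT _ i x) = cint C c)
  (pi_op : forall (F : op L) (a : 'I_(arity F) -> dnode S) (j : dI S) xj,
     (forall k, dle S (projT1 (a k)) j) -> List.In F (dops (dphi S j)) ->
     dopR (dphi S j) F (fun k => dgam S (projT1 (a k)) j (projT2 (a k))) xj ->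
     opint C F (fun k => pi (a k)) = pi (existT _ j xj)).
Variable rep : C -> dnode S.
Hypothesis pi_rep : forall c, pi (rep c) = c.

Definition dgam_node (p : dnode S) (j : dI S) : 'I_(dnv (dphi S j)) :=
  dgam S (projT1 p) j (projT2 p).

Lemma pi_eq_final (p q : dnode S) (j : dI S) :
  pi p = pi q -> dle S (projT1 p) j -> dle S (projT1 q) j -> dgam_node p j = dgam_node q j.
Proof.
move=> /pi_eq [k [pk [qk Ek]]] pj qj.
have [m [km jm]] := dle_directed S_sys k j.
apply: (dgam_inj S_sys jm); rewrite /dgam_node !(dgam_comp S_sys) //.
by rewrite -(dgam_comp S_sys _ pk km) -(dgam_comp S_sys _ qk km) Ek.
Qed.

(* A homomorphism only on final segments of the index set, hence modulo any
   ultrafilter containing them. *)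
Definition limit_embedding (c : C) (j : dI S) : B := v j (dgam_node (rep c) j).

Lemma limit_embedding_op (F : op L) (args : 'I_(arity F) -> C) :
  exists m, forall j, dle S m j ->
    limit_embedding (opint C F args) j = opint B F (fun k => limit_embedding (args k) j).
Proof.
pose a k := rep (args k).
have [i0] := dI_inhabited S_sys.
have [j0 [_ a_j0]] := dle_upper_bound S_sys (fun k => projT1 (a k)) i0.
have [j1 [x [j0j1 [F_j1 F_x]]]] := dop_defined S_sys (fun k => dgam_node (a k) j0).
have a_j1 k : dle S (projT1 (a k)) j1 := dle_trans S_sys (a_j0 k) j0j1.
have a_comp j k : dle S j1 j -> dgam S j1 j (dgam_node (a k) j1) = dgam_node (a k) j.
  by move=> j1j; rewrite /dgam_node (dgam_comp S_sys) //.
have F_x' : dopR (dphi S j1) F (fun k => dgam_node (a k) j1) x.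
  by move: F_x; rewrite (funext (fun k => dgam_comp S_sys _ (a_j0 k) j0j1)).
have pi_x : pi (rep (opint C F args)) = pi (existT _ j1 x).
  rewrite pi_rep -(pi_op a_j1 F_j1 F_x'); congr (opint C F).
  by apply: funext => k; rewrite pi_rep.
have [m [j1m rm]] := dle_directed S_sys j1 (projT1 (rep (opint C F args))).
exists m => j mj; have j1j := dle_trans S_sys j1m mj.
rewrite /limit_embedding (pi_eq_final pi_x (dle_trans S_sys rm mj) j1j).
have [F_j [/(_ F_x') F_xj _]] := dopR_dgam S_sys (fun k => dgam_node (a k) j1) x j1j F_j1.
by move: F_xj; rewrite (funext (fun k => a_comp j k j1j)) => /((v_sat j).2.1 F F_j) <-.
Qed.

Lemma limit_embedding_cst (c : cst L) :
  exists m, forall j, dle S m j -> limit_embedding (cint C c) j = cint B c.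
Proof.
have [i [x [c_i c_x]]] := dcst_named S_sys c.
have pi_x : pi (rep (cint C c)) = pi (existT _ i x) by rewrite pi_rep (pi_cst c_i c_x).
have [m [im rm]] := dle_directed S_sys i (projT1 (rep (cint C c))).
exists m => j mj; have ij := dle_trans S_sys im mj.
rewrite /limit_embedding (pi_eq_final pi_x (dle_trans S_sys rm mj) ij).
have [c_j [/(_ c_x) c_xj _]] := dcR_dgam S_sys x ij c_i.
exact/((v_sat j).2.2 c c_j).
Qed.

Lemma limit_embedding_inj (x y : C) (j : dI S) :
  dle S (projT1 (rep x)) j -> dle S (projT1 (rep y)) j ->
  limit_embedding x j = limit_embedding y j -> x = y.
Proof.
move=> xj yj E; rewrite -(pi_rep x) -(pi_rep y); apply/pi_eq; exists j; do 2!split=> //.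
by apply: contrapT => ne; exact: (v_sat j).1 _ _ ne E.
Qed.

Lemma limit_embeds_in_ultrapower : embeds_in_ultrapower C B.
Proof.
have [U [U_ultra U_final]] :=
  directed_ultrafilter (dI_inhabited S_sys) (dle_trans S_sys) (dle_directed S_sys).
have eventually (P : dI S -> Prop) : (exists m, forall j, dle S m j -> P j) -> U P.
  by move=> [m Pm]; exact (ultrafilter_mono U_ultra (U_final m) Pm).
exists (dI S), U, limit_embedding; split=> //.
split; first by move=> F args; apply: eventually; exact: limit_embedding_op.
split; first by move=> c; apply: eventually; exact: limit_embedding_cst.
move=> x y Uxy.
have [m [xm ym]] := dle_directed S_sys (projT1 (rep x)) (projT1 (rep y)).
have [j [mj Exy]] := ultrafilter_ex U_ultra (ultrafilter_and U_ultra (U_final m) Uxy).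
exact: limit_embedding_inj (dle_trans S_sys xm mj) (dle_trans S_sys ym mj) Exy.
Qed.

End LimitEmbedding.

Lemma limit_ultrapower (L : lang) (B C : algebra L) (S : dsystem L) :
  limit_over B S -> iso_limit C S -> embeds_in_ultrapower C B.
Proof.
move=> [S_sys realizable_S] [pi [pi_surj [pi_eq [pi_cst pi_op]]]].
pose v i := proj1_sig (cid (realizable_S i)).
have v_sat i : dsat B (dphi S i) (v i) := proj2_sig (cid (realizable_S i)).
have [rep pi_rep] := choice pi_surj.
exact (limit_embeds_in_ultrapower S_sys v_sat pi_eq pi_cst pi_op pi_rep).
Qed.

Section Fragments.
Variables (L : lang) (C : algebra L) (c0 : C).

(* The base point [c0] keeps every variable set nonempty, which gives
   [frag_index] a default value. *)
Record fragment := Fragment {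
  frag_elts : {fset {classic C}};
  frag_ops : {fset {classic (op L)}};
  frag_csts : {fset {classic (cst L)}};
  frag_c0 : c0 \in frag_elts }.

Definition frag_le (i j : fragment) : Prop :=
  [/\ (frag_elts i `<=` frag_elts j)%fset, (frag_ops i `<=` frag_ops j)%fset
    & (frag_csts i `<=` frag_csts j)%fset].

Lemma frag_le_refl i : frag_le i i.
Proof. by split; exact: fsubset_refl. Qed.

Lemma frag_le_trans i j k : frag_le i j -> frag_le j k -> frag_le i k.
Proof. by move=> [? ? ?] [? ? ?]; split; apply: fsubset_trans; eassumption. Qed.

Lemma frag_le_antisym i j : frag_le i j -> frag_le j i -> i = j.
Proof.
case: i j => [E O K E0] [E' O' K' E0'] [/= ? ? ?] [/= ? ? ?].
have eE : E = E' by apply/eqP; rewrite eqEfsubset; apply/andP.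
have eO : O = O' by apply/eqP; rewrite eqEfsubset; apply/andP.
have eK : K = K' by apply/eqP; rewrite eqEfsubset; apply/andP.
by subst; rewrite (bool_irrelevance E0 E0').
Qed.

Definition frag_extend (i : fragment) E O K : fragment :=
  @Fragment (frag_elts i `|` E)%fset (frag_ops i `|` O)%fset (frag_csts i `|` K)%fset
    (fsubsetP (fsubsetUl _ _) _ (frag_c0 i)).

Lemma frag_le_extend i E O K : frag_le i (frag_extend i E O K).
Proof. by split; exact: fsubsetUl. Qed.

Definition frag_join (i j : fragment) : fragment :=
  frag_extend i (frag_elts j) (frag_ops j) (frag_csts j).

Lemma frag_le_joinr i j : frag_le j (frag_join i j).
Proof. by split; exact: fsubsetUr. Qed.

Definition frag0 : fragment :=
  @Fragment [fset (c0 : {classic C})]%fset fset0 fset0 (fset11 (c0 : {classic C})).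

Definition frag_size (i : fragment) : nat := #|{: frag_elts i}|.

Definition frag_elt (i : fragment) (x : 'I_(frag_size i)) : C := val (enum_val x).
Arguments frag_elt : clear implicits.

Definition frag_index (i : fragment) (c : C) : 'I_(frag_size i) :=
  enum_rank (insubd (FSetSub (frag_c0 i)) c).

Lemma frag_elt_inj i : injective (frag_elt i).
Proof. by move=> x y /val_inj/enum_val_inj. Qed.

Lemma frag_elt_in i x : frag_elt i x \in frag_elts i.
Proof. exact: fsvalP. Qed.

Lemma frag_indexK i c : c \in frag_elts i -> frag_elt i (frag_index i c) = c.
Proof. by move=> Hc; rewrite /frag_elt /frag_index enum_rankK insubdK. Qed.

Lemma frag_eltK i x : frag_index i (frag_elt i x) = x.
Proof. by apply: frag_elt_inj; rewrite frag_indexK // frag_elt_in. Qed.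

Definition frag_diagram (i : fragment) : diagram L :=
  @Diagram L (frag_ops i) (frag_csts i) (frag_size i)
    (fun F xs x0 => opint C F (fun k => frag_elt i (xs k)) = frag_elt i x0)
    (fun c x => frag_elt i x = cint C c).

Definition frag_gam (i j : fragment) (x : 'I_(frag_size i)) : 'I_(frag_size j) :=
  frag_index j (frag_elt i x).
Arguments frag_gam : clear implicits.

Definition fragment_system : dsystem L :=
  @DSystem L fragment frag_le frag_diagram frag_gam.

Lemma frag_gamK i j x : frag_le i j -> frag_elt j (frag_gam i j x) = frag_elt i x.
Proof. by move=> [/fsubsetP ij _ _]; rewrite frag_indexK // ij // frag_elt_in. Qed.

Lemma frag_opsP i F : List.In F (dops (frag_diagram i)) <-> F \in frag_ops i.
Proof. exact: (rwP (@list_inP {classic (op L)} F (frag_ops i))). Qed.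

Lemma frag_cstsP i c : List.In c (dcsts (frag_diagram i)) <-> c \in frag_csts i.
Proof. exact: (rwP (@list_inP {classic (cst L)} c (frag_csts i))). Qed.

Lemma frag_gam_args (F : op L) i j (xs : 'I_(arity F) -> 'I_(frag_size i)) : frag_le i j ->
  (fun k => frag_elt j (frag_gam i j (xs k))) = (fun k => frag_elt i (xs k)).
Proof. by move=> ij; apply: funext => k; exact: frag_gamK. Qed.

Lemma fragment_system_is_dsystem : is_dsystem fragment_system.
Proof.
split; first exact: frag_le_refl.
split; first exact: frag_le_trans.
split; first exact: frag_le_antisym.
split; first by exists frag0.
split.
  by move=> i j; exists (frag_join i j); split; [exact: frag_le_extend|exact: frag_le_joinr].
split.
  move=> i; exists C, (frag_elt i); split; first by move=> x y nxy /frag_elt_inj.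
  by split=> [F _ xs x0|c _ x].
split; first by move=> i x; exact: frag_eltK.
split; first by move=> i j k ij jk x; rewrite /= /frag_gam frag_gamK.
split.
  move=> i j ij; split.
    by move=> x y nxy /= /(congr1 (frag_elt j)); rewrite !frag_gamK // => /frag_elt_inj.
  have [_ /fsubsetP ops_ij /fsubsetP csts_ij] := ij.
  split=> [F /frag_opsP F_i xs x0|c /frag_cstsP c_i x] /=.
    by rewrite (frag_gam_args _ ij) frag_gamK //; split=> //; apply/frag_opsP; exact: ops_ij.
  by rewrite frag_gamK //; split=> //; apply/frag_cstsP; exact: csts_ij.
split.
  move=> c; pose i := frag_extend frag0 [fset (cint C c : {classic C})]%fset fset0
                                        [fset (c : {classic (cst L)})]%fset.
  exists i, (frag_index i (cint C c)); split; first by apply/frag_cstsP; exact: fsetU1r.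
  by rewrite /= frag_indexK //; exact: fsetU1r.
move=> F i xs; pose y := opint C F (fun k => frag_elt i (xs k)).
pose j := frag_extend i [fset (y : {classic C})]%fset [fset (F : {classic (op L)})]%fset fset0.
exists j, (frag_index j y); split; first exact: frag_le_extend.
split; first by apply/frag_opsP; exact: fsetU1r.
by rewrite /= (frag_gam_args _ (frag_le_extend _ _ _ _)) frag_indexK //; exact: fsetU1r.
Qed.

End Fragments.

Arguments frag_elt {L C c0} i x.
Arguments frag_gam {L C c0} i j x.

Section FragmentLimit.
Variables (L : lang) (B C : algebra L) (c0 : C).

Definition frag_values (i : fragment c0) : list C :=
  List.map (frag_elt i) (enum 'I_(frag_size i)) ++
  List.flat_map (fun F => List.map
      (fun f : {ffun 'I_(arity F) -> 'I_(frag_size i)} => opint C F (fun k => frag_elt i (f k)))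
      (enum {ffun 'I_(arity F) -> 'I_(frag_size i)}))
    (frag_ops i) ++
  List.map (cint C) (frag_csts i).

Lemma discriminated_frag_realizable (i : fragment c0) :
  discriminated C B -> realizable B (frag_diagram i).
Proof.
move=> disc; have [h [[h_op h_cst] h_inj]] := disc (frag_values i).
have elt_in x : List.In (frag_elt i x) (frag_values i).
  by apply: List.in_or_app; left; apply: List.in_map; apply/list_inP; rewrite mem_enum.
have op_in F xs : F \in frag_ops i ->
    List.In (opint C F (fun k => frag_elt i (xs k))) (frag_values i).
  move=> F_i; apply: List.in_or_app; right; apply: List.in_or_app; left.
  apply/List.in_flat_map; exists F; split; first exact/frag_opsP.
  apply/List.in_map_iff; exists (finfun xs); split; last by apply/list_inP; rewrite mem_enum.
  by congr (opint C F); apply: funext => k; rewrite ffunE.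
have cst_in c : c \in frag_csts i -> List.In (cint C c) (frag_values i).
  by move=> c_i; do 2!(apply: List.in_or_app; right); apply: List.in_map; exact/frag_cstsP.
exists (fun x => h (frag_elt i x)); split.
  by move=> x y nxy /h_inj E; apply: nxy; apply: frag_elt_inj; exact: E.
split=> [F /frag_opsP F_i xs x0|c /frag_cstsP c_i x] /=.
  rewrite -(h_op F (fun k => frag_elt i (xs k))); split=> [-> //|].
  exact: h_inj (op_in F xs F_i) (elt_in x0).
by rewrite -h_cst; split=> [-> //|]; exact: h_inj (elt_in x) (cst_in c c_i).
Qed.

Lemma fragment_iso_limit : iso_limit C (fragment_system c0).
Proof.
exists (fun p => frag_elt (projT1 p) (projT2 p)); split.
  move=> c; pose i := frag_extend (frag0 c0) [fset (c : {classic C})]%fset fset0 fset0.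
  by exists (existT _ i (frag_index i c)); rewrite /= frag_indexK //; exact: fsetU1r.
split.
  move=> [i x] [j y] /=; split=> [E|[k [ik [jk]]]].
    exists (frag_join i j); split; first exact: frag_le_extend.
    split; first exact: frag_le_joinr.
    by apply: frag_elt_inj; rewrite !frag_gamK //; [exact: frag_le_joinr|exact: frag_le_extend].
  by move/(congr1 (frag_elt k)); rewrite !frag_gamK.
split=> // F a j xj a_j _ /= dop; rewrite -[RHS]/(frag_elt j xj) -dop.
by congr (opint C F); apply: funext => k; rewrite frag_gamK //; exact: a_j.
Qed.

End FragmentLimit.

Section DiscriminatedLimit.
Variables (L : lang) (B C : algebra L).

(* Fragments need a base point. *)
Lemma empty_limit : ~ inhabited C -> exists S : dsystem L, limit_over B S /\ iso_limit C S.
Proof.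
move=> nC; have void (T : Type) (c : C) : T by case: (nC (inhabits c)).
have void0 (T : Type) (x : 'I_0) : T by case: x => m; rewrite ltn0.
pose d := @Diagram L nil nil 0 (fun _ _ _ => False) (fun _ _ => False).
have d_sat (M : algebra L) : realizable M d.
  by exists (void0 M); split=> [x|]; [exact: void0 x|split].
exists (@DSystem L unit (fun _ _ => True) (fun _ => d) (fun _ _ x => x)); split.
  split; last by move=> i; exact: d_sat.
  split; first by [].
  split; first by [].
  split; first by move=> [] [].
  split; first by exists tt.
  split; first by move=> *; exists tt.
  split; first by move=> i; exists B; exact: d_sat.
  split; first by [].
  split; first by [].
  split; first by move=> *; split=> [x|]; [exact: void0 x|split].
  split=> [c|F i xs]; [exact: void (cint C c)|exact: void (opint C F (fun k => void0 C (xs k)))].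
exists (fun p => void0 C (projT2 p)); split; first by move=> c; exact: void c.
by split=> [[? x]|]; [exact: void0 x|split=> [c i x|F a j x]; exact: void0 x].
Qed.

Lemma discriminated_limit :
  discriminated C B -> exists S : dsystem L, limit_over B S /\ iso_limit C S.
Proof.
move=> disc; case: (pselect (inhabited C)) => [[c0]|/empty_limit //].
exists (fragment_system c0); split; last exact: fragment_iso_limit.
split; first exact: fragment_system_is_dsystem.
by move=> i; exact: discriminated_frag_realizable.
Qed.

End DiscriminatedLimit.

Theorem theoremA (L : lang) (B C : algebra L) :
  eq_noetherian B -> fin_gen C ->
  (Th_univ_sub B C <-> Th_exist_sub C B) /\
  (Th_univ_sub B C <-> embeds_in_ultrapower C B) /\
  (Th_univ_sub B C <-> discriminated C B) /\
  (Th_univ_sub B C <-> exists S : dsystem L, limit_over B S /\ iso_limit C S) /\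
  (Th_univ_sub B C <->
     exists (n : nat) (p : literal L n -> Prop),
       complete_atomic_type B n p /\ iso_term_quotient C (fun t s => p (true, t, s))) /\
  (Th_univ_sub B C <->
     exists (n : nat) (S : system L n),
       irreducible B (Vset B S) /\ iso_coord_alg B C (Vset B S)).
Proof.
move=> noeth fg.
have univ_disc : Th_univ_sub B C <-> discriminated C B.
  by split; [exact: univ_discriminated|exact: discriminated_univ].
split; first exact: Th_univ_exist_sub.
split; first by split=> [/univ_disc/discriminated_ultrapower|/ultrapower_univ].
split=> //.
split.
  split=> [/univ_disc/discriminated_limit //|[S [S_lim C_iso]]].
  exact/ultrapower_univ/(limit_ultrapower S_lim C_iso).
split.
  split=> [/(univ_complete_atomic_type fg) //|[n [p [p_type C_iso]]]].
  exact: complete_atomic_type_univ p_type C_iso.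
split=> [/univ_disc/(discriminated_coord_alg fg) //|[n [S [S_irr C_iso]]]].
exact/univ_disc/(coord_alg_discriminated S_irr C_iso).
Qed.
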